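(* Let $\mathbb{K}$ be either $\mathbb{R}$ or $\mathbb{C}$, with all coefficients and solutions in $\mathbb{K}$. Let $D$ be a positive integer and let $1 \le D < q \le \infty$. Let $I$ be an infinite set. For all $i\in I$ and $d \in \{1,\dots,D\}$ let $\mathbf{a}_{i,d} = (a_{i,d,j})_{j=1}^\infty \in \ell^{q/(q-d)}$, and let $b_i \in \mathbb{K}$. For all $i \in I$ consider the multiplicative polynomial equation \[ P_i(\mathbf{x}) = \sum_{k=1}^{D} \sum_{(d_1,\dots,d_k)\in \mathcal{D}_k} (\mathbf{a}_{i,d_1}, \mathbf{x}^{d_1}) (\mathbf{a}_{i,d_2}, \mathbf{x}^{d_2}) \cdots (\mathbf{a}_{i,d_k}, \mathbf{x}^{d_k}) = b_i, \] where $(\mathbf{a}_{i,d},\mathbf{x}^d) = \sum_{j=1}^\infty a_{i,d,j} x_j^d$. Equivalently, $P_i(\mathbf{x}) = \sum_{k=1}^D\sum_{\Delta\in\mathcal{D}_k}\sum_{J\in\mathbb{N}^k} a_{i,\Delta,J}\, x_J^{\Delta}$ with $a_{i,(d_1,\dots,d_k),(j_1,\dots,j_k)} = a_{i,d_1,j_1}\cdots a_{i,d_k,j_k}$ and $x_J^\Delta = x_{j_1}^{d_1}\cdots x_{j_k}^{d_k}$. Let $M>0$. If for every finite subset $S$ of $I$ the finite set of equations $\{P_i(\mathbf{x}) = b_i : i \in S\}$ has a solution $\mathbf{x}_S \in \ell^q$ with $\|\mathbf{x}_S\|_q \le M$, then the infinite set of equations $\{P_i(\mathbf{x}) = b_i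 : i\in I\}$ has a solution $\mathbf{x} \in \ell^q$ with $\|\mathbf{x}\|_q \le M$.
   Context: $\mathbb{N}=\{1,2,3,\dots\}$. For $k\in\{1,\dots,D\}$, $\mathcal{D}_k = \{(d_1,\dots,d_k)\in\mathbb{N}^k : d_1+\cdots+d_k \le D\}$. For $q=\infty$ one sets $q/(q-d)=1$ and $q/d=\infty$. $\ell^p$ ($1\le p<\infty$) denotes sequences with $\|\mathbf{a}\|_p=(\sum_j|a_j|^p)^{1/p}<\infty$ and $\ell^\infty$ bounded sequences with the sup norm; $\mathbf{x}^d = (x_j^d)_{j\ge1}$. For $\mathbf{x}\in\ell^q$ each series $(\mathbf{a}_{i,d},\mathbf{x}^d)$ converges absolutely by Hölder's inequality, since $\mathbf{x}^d\in\ell^{q/d}$ and $(q/(q-d), q/d)$ is a conjugate pair. *)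

From HB Require Import structures.
From mathcomp Require Import all_boot all_order all_algebra.
From mathcomp Require Import all_classical all_reals all_analysis.
From mathcomp Require Import complex.
Set Implicit Arguments. Unset Strict Implicit. Unset Printing Implicit Defensive.
Import Order.TTheory GRing.Theory Num.Theory.
Import numFieldNormedType.Exports.
Local Open Scope classical_set_scope.
Local Open Scope ring_scope.

Section Lp.
Variables (R : realType) (K : numFieldType) (nrm : K -> R).

(* Membership in l^p for p in [1, +oo] (p : \bar R). Indices j : nat
   (0-based, i.e. j = 0 corresponds to the paper's index 1). *)
Definition lp_mem (p : \bar R) (x : nat -> K) : Prop :=
  match p with
  | r%:E => (\sum_(0 <= j <oo) ((nrm (x j)) `^ r)%:E < +oo)%E
  | +oo%E => exists B : R, forall j, nrm (x j) <= B
  | -oo%E => False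
  end.

Definition lp_norm (p : \bar R) (x : nat -> K) : \bar R :=
  match p with
  | r%:E => ((\sum_(0 <= j <oo) ((nrm (x j)) `^ r)%:E) `^ r^-1)%E
  | +oo%E => ereal_sup [set ((nrm (x j))%:E) | j in [set: nat]]
  | -oo%E => -oo%E
  end.

Definition dual_exp (q : \bar R) (d : nat) : \bar R :=
  match q with
  | r%:E => (r / (r - d%:R))%:E
  | +oo%E => 1%E
  | -oo%E => -oo%E
  end.

Definition pairing (a : nat -> K) (d : nat) (x : nat -> K) : K :=
  limn (series (fun j => a j * x j ^+ d)).

(* P(x) = sum_{k=1}^D sum_{(d_1..d_k) in D_k} prod_l (a_{d_l}, x^{d_l}),
   where a d is the coefficient sequence a_{i,d}, and D_k is the set of
   k-tuples of positive integers with sum <= D (each d_l lies in 1..D). *)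
Definition Ppoly (D : nat) (a : nat -> nat -> K) (x : nat -> K) : K :=
  \sum_(k < D)
    \sum_(t : {ffun 'I_k.+1 -> 'I_D.+1} |
          [forall l, 0 < (t l : nat)]%N && (\sum_(l < k.+1) (t l : nat) <= D)%N)
      \prod_(l < k.+1) pairing (a (t l)) (t l) x.

Definition compactness_statement : Prop :=
  forall (D : nat) (q : \bar R) (I : Type)
         (a : I -> nat -> nat -> K) (b : I -> K) (M : R),
    (0 < D)%N ->
    (D%:R%:E < q)%E ->
    ~ finite_set [set: I] ->
    (forall i d, (1 <= d <= D)%N -> lp_mem (dual_exp q d) (a i d)) ->
    0 < M ->
    (forall S : set I, finite_set S ->
       exists x : nat -> K,
         [/\ lp_mem q x, (lp_norm q x <= M%:E)%E &
             forall i, S i -> Ppoly D (a i) x = b i]) ->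
    exists x : nat -> K,
      [/\ lp_mem q x, (lp_norm q x <= M%:E)%E &
          forall i, Ppoly D (a i) x = b i].

End Lp.

From HB Require Import structures.
From mathcomp Require Import all_boot all_order all_algebra.
From mathcomp Require Import all_classical all_reals all_analysis.
From mathcomp Require Import complex.
From mathcomp Require Import ring lra.
Import Order.TTheory GRing.Theory Num.Theory.
Import numFieldNormedType.Exports.
Local Open Scope classical_set_scope.
Local Open Scope ring_scope.
Set Implicit Arguments. Unset Strict Implicit. Unset Printing Implicit Defensive.

(* For every finite S ⊆ I choose a solution x_S in the closed ball B of radius M
   of l^q, and let x be the coordinatewise limit of the x_S along an ultrafilter
   on the finite subsets of I containing every {S | S0 ⊆ S}; it exists because
   all coordinates are bounded by M, and it lies in B because finite partial
   sums of |x_j|^q pass to the limit.  On B every series (a_{i,d}, x^d) has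
   uniformly small tails (Young's inequality with the conjugate exponents
   q/(q-d) and q/d, or directly when q = oo), so P_i is continuous on B for
   coordinatewise convergence.  As P_i(x_S) = b_i whenever i ∈ S, P_i(x) = b_i.
   Only completeness and the Bolzano-Weierstrass property of the real-valued
   absolute value of K are used, so R and R[i] are treated at once. *)

Section nonneg_series.
Variable R : realType.
Implicit Types (f : nat -> R) (B e : R).

Lemma nneseries_ub f B : (forall j, 0 <= f j) ->
  (forall n, \sum_(0 <= j < n) f j <= B) ->
  (\sum_(0 <= j <oo) (f j)%:E <= B%:E)%E.
Proof.
move=> f0 fB; apply: lime_le.
  by apply: is_cvg_nneseries => n _ _; rewrite lee_fin.
by apply: nearW => n; rewrite sumEFin lee_fin.
Qed.

Lemma partial_le_nneseries f n : (forall j, 0 <= f j) ->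
  ((\sum_(0 <= j < n) f j)%:E <= \sum_(0 <= j <oo) (f j)%:E)%E.
Proof.
by move=> f0; rewrite -sumEFin; apply: nneseries_lim_ge => k _ _; rewrite lee_fin.
Qed.

Lemma sum_tail_le f N m : (forall j, 0 <= f j) ->
  \sum_(N <= j < m) f j <= \sum_(0 <= j < m) f j.
Proof.
move=> f0; have [Nm|mN] := leqP N m; last by rewrite big_geq ?sumr_ge0 // ltnW.
by rewrite (big_cat_nat (leq0n N) Nm) /= lerDr sumr_ge0.
Qed.

Lemma nneseries_tails_small f : (forall j, 0 <= f j) ->
  (\sum_(0 <= j <oo) (f j)%:E < +oo)%E ->
  forall e, 0 < e -> exists N, forall m, \sum_(N <= j < m) f j <= e.
Proof.
move=> f0 f_fin e e0.
have s_fin : (\sum_(0 <= j <oo) (f j)%:E)%E \is a fin_num.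
  by rewrite ge0_fin_numE // nneseries_ge0 // => n _ _; rewrite lee_fin.
set L := fine (\sum_(0 <= j <oo) (f j)%:E)%E.
have sE : (\sum_(0 <= j <oo) (f j)%:E)%E = L%:E by rewrite fineK.
have partial_le n : \sum_(0 <= j < n) f j <= L.
  by rewrite -lee_fin -sE partial_le_nneseries.
have [N LeN] : exists N, L - e < \sum_(0 <= j < N) f j.
  apply/not_existsP => LeN.
  have : (\sum_(0 <= j <oo) (f j)%:E <= (L - e)%:E)%E.
    by apply: nneseries_ub => // n; rewrite leNgt; apply/negP/LeN.
  rewrite sE lee_fin; lra.
exists N => m; have [Nm|mN] := leqP N m; last by rewrite big_geq ?ltW // ltnW.
have := partial_le m; rewrite (big_cat_nat (leq0n N) Nm) /=; lra.
Qed.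

End nonneg_series.

Section real_powers.
Variable R : realType.

(* Young's inequality for the conjugate exponents r/(r-d) and r/d, applied to
   (mu^(-d/r) u) * (mu^(d/r) w^d). *)
Lemma young_weighted (d : nat) (r u w mu : R) : (0 < d)%N -> d%:R < r ->
  0 <= u -> 0 <= w -> 0 < mu ->
  u * w ^+ d <=
    mu * w `^ r + mu `^ (- (d%:R / (r - d%:R))) * u `^ (r / (r - d%:R)).
Proof.
move=> d_gt0 dr u0 w0 mu0.
have d0 : 0 < d%:R :> R by rewrite ltr0n.
have r0 : 0 < r := lt_trans d0 dr.
have rd0 : 0 < r - d%:R by rewrite subr_gt0.
set p := r / (r - d%:R); set q := r / d%:R.
have p1 : 1 <= p by rewrite ler_pdivlMr // mul1r gerBl ltW.
have q1 : 1 <= q by rewrite ler_pdivlMr // mul1r ltW.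
have pq : p^-1 + q^-1 = 1 by rewrite !invf_div; field; rewrite gt_eqF.
set c := mu `^ (d%:R / r).
have c0 : 0 < c by rewrite powR_gt0.
have p0 : 0 < p := lt_le_trans ltr01 p1.
have q0 : 0 < q := lt_le_trans ltr01 q1.
have ab : c^-1 * u * (c * w ^+ d) = u * w ^+ d.
  by rewrite mulrACA mulVf ?gt_eqF // mul1r.
have ap : (c^-1 * u) `^ p = mu `^ (- (d%:R / (r - d%:R))) * u `^ p.
  rewrite powRM ?invr_ge0 ?(ltW c0) // /c -powRN -powRrM.
  congr (_ `^ _ * _).
  by rewrite /p; field; rewrite !gt_eqF.
have bq : (c * w ^+ d) `^ q = mu * w `^ r.
  rewrite powRM ?exprn_ge0 ?(ltW c0) // /c -powRrM -powR_mulrn // -powRrM.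
  have -> : d%:R / r * q = 1 by rewrite /q; field; rewrite !gt_eqF.
  have -> : d%:R * q = r by rewrite /q; field; rewrite gt_eqF.
  by rewrite powRr1 // ltW.
have ci0 : 0 <= c^-1 by rewrite invr_ge0 ltW.
have := @conjugate_powR _ (c^-1 * u) (c * w ^+ d) p q (mulr_ge0 ci0 u0)
  (mulr_ge0 (ltW c0) (exprn_ge0 _ w0)) p0 q0 pq.
rewrite ab ap bq => /le_trans; apply; rewrite addrC lerD //.
  by rewrite ler_pdivrMr // ler_peMr // mulr_ge0 ?powR_ge0 // ltW.
by rewrite ler_pdivrMr // ler_peMr // mulr_ge0 ?powR_ge0.
Qed.

Lemma cvg_powR T (F : set_system T) {FF : ProperFilter F} (u : T -> R) (w r : R) :
  0 < r -> (forall t, 0 <= u t) -> u t @[t --> F] --> w ->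
  u t `^ r @[t --> F] --> w `^ r.
Proof.
move=> r0 u0 uw.
have w0 : 0 <= w by apply: (closed_cvg _ (@closed_ge R 0) _ _ uw); exact: nearW.
have [w0E|wn0] := eqVneq w 0.
  move: uw; rewrite w0E powR0 ?gt_eqF // => /cvgrPdist_lt uw.
  apply/cvgrPdist_lt => e e0; have e'0 : 0 < e `^ r^-1 by rewrite powR_gt0.
  apply: filterS (uw _ e'0) => t /=; rewrite !sub0r !normrN !ger0_norm ?powR_ge0 //.
  move=> /(@gt0_ltr_powR _ r r0); rewrite !nnegrE powR_ge0 => /(_ (u0 t) isT).
  by rewrite -powRrM mulVf ?gt_eqF // powRr1 // ltW.
have w_gt0 : 0 < w by rewrite lt_neqAle eq_sym wn0.
have u_gt0 : \forall t \near F, 0 < u t.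
  move/cvgrPdist_lt: uw => /(_ _ w_gt0); apply: filterS => t /=.
  by rewrite ltr_norml => /andP[? ?]; lra.
rewrite {2}/powR (negbTE wn0).
apply: cvg_trans (near_eq_cvg _) _.
  by apply: filterS u_gt0 => t /= ut; rewrite /powR gt_eqF.
apply: (@continuous_cvg _ _ _ _ _ (fun t => r * ln (u t)) expR).
  exact: continuous_expR.
apply: cvgMl_tmp; exact: (continuous_cvg _ (continuous_ln w_gt0) uw).
Qed.

End real_powers.

Definition finite_cofinal (I : Type) : set_system (set I) :=
  [set A | exists2 S0, finite_set S0 & forall S, finite_set S -> S0 `<=` S -> A S].

Lemma finite_cofinal_proper (I : Type) : ProperFilter (@finite_cofinal I).
Proof.
apply: Build_ProperFilter_ex.
  by move=> A [S0 fS0 S0A]; exists S0; exact: S0A.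
split.
- by exists set0 => //; exact: finite_set0.
- move=> A B [S0 fS0 S0A] [S1 fS1 S1B]; exists (S0 `|` S1).
    by rewrite finite_setU.
  by move=> S fS S01; split; [apply: S0A | apply: S1B] => // i Si; apply: S01;
    [left | right].
- by move=> A B AB [S0 fS0 S0A]; exists S0 => // S fS S0S; apply/AB/S0A.
Qed.

Section absolute_value.
Variables (R : realType) (K : numFieldType) (nrm : K -> R).
Hypothesis nrm_ge0 : forall x, 0 <= nrm x.
Hypothesis nrm0_eq0 : forall x, nrm x = 0 -> x = 0.
Hypothesis nrmD : forall x y, nrm (x + y) <= nrm x + nrm y.
Hypothesis nrmM : forall x y, nrm (x * y) = nrm x * nrm y.
Hypothesis nrmN : forall x, nrm (- x) = nrm x.
Hypothesis nrm0 : nrm 0 = 0.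
Hypothesis nrm1 : nrm 1 = 1.

Lemma nrm_distC x y : nrm (x - y) = nrm (y - x).
Proof. by rewrite -nrmN opprB. Qed.

Lemma nrm_distD x y z : nrm (x - z) <= nrm (x - y) + nrm (y - z).
Proof. by rewrite (le_trans _ (nrmD _ _)) // addrA subrK. Qed.

Lemma nrm_dist_dist x y : `|nrm x - nrm y| <= nrm (x - y).
Proof.
have := nrm_distD x y 0; have := nrm_distD y x 0.
rewrite !subr0 (nrm_distC y x) => h1 h2; rewrite ler_norml; apply/andP; split; lra.
Qed.

Lemma nrmX x n : nrm (x ^+ n) = nrm x ^+ n.
Proof. by elim: n => [|n IH]; rewrite ?expr0 ?nrm1 // !exprS nrmM IH. Qed.

Lemma ler_nrm_sum (I : Type) (r : seq I) (P : pred I) (F : I -> K) :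
  nrm (\sum_(i <- r | P i) F i) <= \sum_(i <- r | P i) nrm (F i).
Proof.
elim: r => [|i r IH]; first by rewrite !big_nil nrm0.
rewrite !big_cons; case: (P i) => //.
by rewrite (le_trans (nrmD _ _)) // lerD2l.
Qed.

Section ncvg.
Variables (T : Type) (F : set_system T).
Context {FF : Filter F}.

(* Convergence measured by [nrm]; for K = R[i] this is not the convergence of
   the numFieldType topology, whose norm takes values in R[i]. *)
Definition ncvg (f : T -> K) (L : K) :=
  forall e : R, 0 < e -> F [set t | nrm (f t - L) < e].

Lemma eq_ncvg f g L : (forall t, f t = g t) -> ncvg f L -> ncvg g L.
Proof. by move=> fg fL e e0; apply: filterS (fL e e0) => t /=; rewrite fg. Qed.

Lemma ncvg_cst c : ncvg (fun _ => c) c.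
Proof. by move=> e e0; apply: nearW => t /=; rewrite subrr nrm0. Qed.

Lemma ncvgD f g A B : ncvg f A -> ncvg g B -> ncvg (fun t => f t + g t) (A + B).
Proof.
move=> fA gB e e0; have e2 : 0 < e / 2 by rewrite divr_gt0.
apply: filterS (filterI (fA _ e2) (gB _ e2)) => t [/= fAt gBt].
by rewrite opprD addrACA (le_lt_trans (nrmD _ _)) // (splitr e) ltrD.
Qed.

Lemma ncvgM f g A B : ncvg f A -> ncvg g B -> ncvg (fun t => f t * g t) (A * B).
Proof.
move=> fA gB e e0; set c := nrm A + nrm B + 1.
have c0 : 0 < c by rewrite /c ltr_wpDl // addr_ge0.
set d := Num.min 1 (e / (2 * c)).
have d0 : 0 < d by rewrite lt_min ltr01 divr_gt0 // mulr_gt0.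
have dc : d * c <= e / 2.
  by rewrite -ler_pdivlMr // -mulrA -invfM ge_min lexx orbT.
apply: filterS (filterI (fA _ d0) (gB _ d0)) => t [/= fAt gBt].
have -> : f t * g t - A * B = f t * (g t - B) + (f t - A) * B.
  by rewrite mulrBr mulrBl addrA subrK.
have ft_le : nrm (f t) <= nrm A + 1.
  have := nrm_distD (f t) A 0; rewrite !subr0 => /le_trans; apply.
  by rewrite addrC lerD2l (le_trans (ltW fAt)) // ge_min lexx.
rewrite (le_lt_trans (nrmD _ _)) // !nrmM.
apply: (@le_lt_trans _ _ ((nrm A + 1) * d + d * nrm B)).
  by rewrite lerD ?ler_pM ?ler_wpM2r // ltW.
have -> : (nrm A + 1) * d + d * nrm B = d * c by rewrite /c; ring.
by rewrite (le_lt_trans dc) // ltr_pdivrMr // ltr_pMr // ltr1n.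
Qed.

Lemma ncvgX f A n : ncvg f A -> ncvg (fun t => f t ^+ n) (A ^+ n).
Proof.
move=> fA; elim: n => [|n IH].
  by rewrite expr0; apply: eq_ncvg (ncvg_cst 1) => t; rewrite expr0.
rewrite exprS.
by apply: eq_ncvg (ncvgM fA IH) => t; rewrite exprS.
Qed.

Lemma ncvg_big (op : K -> K -> K) :
    (forall f g A B, ncvg f A -> ncvg g B -> ncvg (fun t => op (f t) (g t)) (op A B)) ->
  forall (x0 : K) (I : Type) (r : seq I) (P : pred I) (Fi : I -> T -> K) (L : I -> K),
    (forall i, P i -> ncvg (Fi i) (L i)) ->
  ncvg (fun t => \big[op/x0]_(i <- r | P i) Fi i t) (\big[op/x0]_(i <- r | P i) L i).
Proof.
move=> op_ncvg x0 I r P Fi L FL; elim: r => [|i r IH].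
  by rewrite big_nil; apply: eq_ncvg (ncvg_cst x0) => t; rewrite big_nil.
rewrite big_cons; case: ifP => Pi.
  by apply: eq_ncvg (op_ncvg _ _ _ _ (FL i Pi) IH) => t; rewrite big_cons Pi.
by apply: eq_ncvg IH => t; rewrite big_cons Pi.
Qed.

Lemma ncvg_nrm f L : ncvg f L -> nrm (f t) @[t --> F] --> nrm L.
Proof.
move=> fL; apply/cvgrPdist_lt => e e0; apply: filterS (fL e e0) => t /=.
by apply: le_lt_trans; rewrite nrm_distC nrm_dist_dist.
Qed.

Lemma ncvg_near_cst {PF : ProperFilter F} f L b :
  ncvg f L -> F [set t | f t = b] -> L = b.
Proof.
move=> fL fb; apply/eqP; rewrite -subr_eq0; apply/eqP/nrm0_eq0.
apply/eqP; rewrite eq_le nrm_ge0 andbT; apply/ler_addgt0Pr => e e0.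
have [t [/= fLt <-]] := filter_ex (filterI (fL _ e0) fb).
by rewrite add0r nrm_distC ltW.
Qed.

End ncvg.

Hypothesis nrm_complete : forall u : nat -> K,
  (forall e, 0 < e -> exists N, forall n m, (N <= n)%N -> (N <= m)%N ->
     nrm (u n - u m) <= e) ->
  ncvg \oo u (limn u).

Hypothesis nrm_ultralim : forall (T : Type) (U : set_system T), UltraFilter U ->
  forall (f : T -> K) (M : R), U [set t | nrm (f t) <= M] -> exists L, ncvg U f L.

Lemma ultralim_coord T (U : set_system T) (g : T -> nat -> K) M :
  UltraFilter U -> U [set t | forall j, nrm (g t j) <= M] ->
  exists x, forall j, ncvg U (fun t => g t j) (x j).
Proof.
move=> UU gM; have [x hx] := choice (fun j => nrm_ultralim UU (M := M)
  (filterS (fun t => (@^~ j)) gM)).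
by exists x.
Qed.

Definition unif_small_tails (B : set (nat -> K)) (a : nat -> K) (d : nat) :=
  forall e, 0 < e -> exists N, forall x, B x ->
    forall m, \sum_(N <= j < m) nrm (a j) * nrm (x j) ^+ d <= e.

Lemma pairing_partial_sum_dist (a x : nat -> K) d N e :
  (forall m, \sum_(N <= j < m) nrm (a j) * nrm (x j) ^+ d <= e) ->
  unif_small_tails [set x] a d ->
  nrm (pairing a d x - \sum_(0 <= j < N) a j * x j ^+ d) <= e.
Proof.
move=> tailN tails; set u := series (fun j => a j * x j ^+ d).
have du n m : (n <= m)%N ->
    nrm (u m - u n) <= \sum_(n <= j < m) nrm (a j) * nrm (x j) ^+ d.
  move=> nm; rewrite /u /series /= (big_cat_nat (leq0n n) nm) /= addrAC subrr.
  rewrite add0r (le_trans (ler_nrm_sum _ _ _)) //.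
  by apply: ler_sum => j _; rewrite nrmM nrmX.
have u_cauchy e' : 0 < e' -> exists N', forall n m, (N' <= n)%N -> (N' <= m)%N ->
    nrm (u n - u m) <= e'.
  move=> e'0; have [N' tailN'] := tails _ (divr_gt0 e'0 (ltr0n _ 2)).
  exists N' => n m n_ge m_ge; rewrite (le_trans (nrm_distD _ (u N') _)) //.
  by rewrite (nrm_distC (u N')) (splitr e') lerD // (le_trans (du _ _ _)) ?tailN'.
apply/ler_addgt0Pr => eta eta0.
have [n [/= Nn un]] := filter_ex (filterI (nbhs_infty_ge N) (nrm_complete u_cauchy eta0)).
have := nrm_distD (limn u) (u n) (u N); rewrite (nrm_distC _ (u n)).
have := le_trans (du _ _ Nn) (tailN n).
move=> ? ?; change (nrm (limn u - u N) <= e + eta); lra.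
Qed.

Lemma ncvg_pairing (B : set (nat -> K)) (a : nat -> K) d T (U : set_system T)
    {PU : ProperFilter U} (g : T -> nat -> K) (x : nat -> K) :
  unif_small_tails B a d -> U [set t | B (g t)] -> B x ->
  (forall j, ncvg U (fun t => g t j) (x j)) ->
  ncvg U (fun t => pairing a d (g t)) (pairing a d x).
Proof.
move=> tails Bg Bx gx e e0; have e3 : 0 < e / 3 by rewrite divr_gt0.
have [N tailN] := tails _ e3.
have tails1 y : B y -> unif_small_tails [set y] a d.
  by move=> By e' e'0; have [N' tailN'] := tails _ e'0; exists N' => _ ->; apply: tailN'.
have partial_ncvg : ncvg U (fun t => \sum_(0 <= j < N) a j * g t j ^+ d)
    (\sum_(0 <= j < N) a j * x j ^+ d).
  by apply: (ncvg_big (@ncvgD _ _ _)) => j _; exact: ncvgM (ncvg_cst _) (ncvgX d (gx j)).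
apply: filterS (filterI Bg (partial_ncvg _ e3)) => t [/= Bgt partial_near].
have := pairing_partial_sum_dist (tailN _ Bgt) (tails1 _ Bgt).
have := pairing_partial_sum_dist (tailN _ Bx) (tails1 _ Bx).
move: partial_near; set Pg := pairing _ _ (g t); set Px := pairing _ _ x.
set sx := \sum_(0 <= j < N) a j * x j ^+ d.
set sg := \sum_(0 <= j < N) a j * g t j ^+ d.
have := nrm_distD Pg sg Px; have := nrm_distD sg sx Px; rewrite (nrm_distC sx Px).
lra.
Qed.

Lemma ncvg_Ppoly D (a : nat -> nat -> K) (B : set (nat -> K)) T (U : set_system T)
    {PU : ProperFilter U} (g : T -> nat -> K) (x : nat -> K) :
  (forall d, (0 < d <= D)%N -> unif_small_tails B (a d) d) ->
  U [set t | B (g t)] -> B x -> (forall j, ncvg U (fun t => g t j) (x j)) ->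
  ncvg U (fun t => Ppoly D a (g t)) (Ppoly D a x).
Proof.
move=> tails Bg Bx gx; apply: (ncvg_big (@ncvgD _ _ _)) => k _.
apply: (ncvg_big (@ncvgD _ _ _)) => t /andP[/forallP t_gt0 _].
apply: (ncvg_big (@ncvgM _ _ _)) => l _; apply: ncvg_pairing Bg Bx gx.
by apply: tails; rewrite t_gt0 -ltnS ltn_ord.
Qed.

Lemma ball_compactness D (I : Type) (a : I -> nat -> nat -> K) (b : I -> K) M
    (B : set (nat -> K)) :
  (forall x, B x -> forall j, nrm (x j) <= M) ->
  (forall T (U : set_system T), ProperFilter U -> forall g x,
    U [set t | B (g t)] -> (forall j, ncvg U (fun t => g t j) (x j)) -> B x) ->
  (forall i d, (0 < d <= D)%N -> unif_small_tails B (a i d) d) ->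
  (forall S, finite_set S -> exists2 x, B x & forall i, S i -> Ppoly D (a i) x = b i) ->
  exists2 x, B x & forall i, Ppoly D (a i) x = b i.
Proof.
move=> B_le B_closed tails solvable.
have [U [UU cofU]] := ultraFilterLemma (finite_cofinal_proper I).
have /choice[xs xsP] : forall S : set I, exists x : nat -> K, finite_set S ->
    B x /\ forall i, S i -> Ppoly D (a i) x = b i.
  move=> S; have [fS|nfS] := pselect (finite_set S); last by exists (fun=> 0) => /nfS.
  by have [x Bx Sx] := solvable S fS; exists x.
have U_B : U [set S | B (xs S)].
  by apply: cofU; exists set0 => [|S fS _]; [exact: finite_set0 | case: (xsP S fS)].
have [x xsx] := ultralim_coord UU (filterS (fun S => @B_le (xs S)) U_B).
have Bx : B x := B_closed _ _ (@ultra_proper _ _ UU) _ _ U_B xsx.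
exists x => // i.
apply: ncvg_near_cst (ncvg_Ppoly (tails i) U_B Bx xsx) _.
by apply: cofU; exists [set i] => [|S fS iS]; [exact: finite_set1 | apply: (xsP S fS).2; apply: iS].
Qed.

Definition lp_closed_ball (q : \bar R) (M : R) : set (nat -> K) :=
  [set x | lp_mem nrm q x /\ (lp_norm nrm q x <= M%:E)%E].

Lemma lp_closed_ball_finE (r M : R) x : 0 < r -> 0 < M ->
  lp_closed_ball r%:E M x <-> forall N, \sum_(0 <= j < N) nrm (x j) `^ r <= M `^ r.
Proof.
move=> r0 M0; rewrite /lp_closed_ball /lp_mem /lp_norm /=.
set s := (\sum_(0 <= j <oo) ((nrm (x j)) `^ r)%:E)%E.
have s0 : (0 <= s)%E by apply: nneseries_ge0 => n _ _; rewrite lee_fin powR_ge0.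
have sE : (s < +oo)%E -> s = (fine s)%:E by move=> s_fin; rewrite fineK // ge0_fin_numE.
split=> [[s_fin sM] N|partialM].
  have s_ge := partial_le_nneseries N (fun j => powR_ge0 (nrm (x j)) r).
  rewrite -/s (sE s_fin) lee_fin in s_ge.
  rewrite (sE s_fin) poweR_EFin lee_fin in sM.
  apply: le_trans s_ge _.
  have -> : fine s = (fine s `^ r^-1) `^ r.
    by rewrite -powRrM mulVf ?gt_eqF // powRr1 // -lee_fin -(sE s_fin).
  by rewrite ge0_ler_powR ?nnegrE ?powR_ge0 // ltW.
have sM : (s <= (M `^ r)%:E)%E by apply: nneseries_ub => // j; exact: powR_ge0.
have s_fin : (s < +oo)%E by apply: le_lt_trans sM (ltry _).
split => //; rewrite (sE s_fin) lee_fin in sM.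
rewrite (sE s_fin) poweR_EFin lee_fin.
have -> : M = (M `^ r) `^ r^-1 by rewrite -powRrM mulfV ?gt_eqF // powRr1 // ltW.
by apply: ge0_ler_powR; rewrite ?nnegrE ?powR_ge0 ?fine_ge0 // invr_ge0 ltW.
Qed.

Lemma lp_closed_ball_infE M x :
  lp_closed_ball +oo%E M x <-> forall j, nrm (x j) <= M.
Proof.
split=> [[_ /ereal_supP xM] j | xM]; first by rewrite -lee_fin; apply: xM; exists j.
by split; [exists M | apply/ereal_supP => _ [j _ <-]; rewrite lee_fin].
Qed.

Lemma lp_closed_ball_coord_le q M : (0 < q)%E -> 0 < M ->
  forall x, lp_closed_ball q M x -> forall j, nrm (x j) <= M.
Proof.
case: q => [r||] // r0 M0 x; last by move/lp_closed_ball_infE.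
rewrite lte_fin in r0; move/(lp_closed_ball_finE _ r0 M0) => xM j.
move: (xM j.+1); rewrite big_nat_recr //= => {}xM.
have xjM : nrm (x j) `^ r <= M `^ r.
  by apply: le_trans xM; rewrite lerDr sumr_ge0 // => i _; exact: powR_ge0.
rewrite leNgt; apply/negP => /(@gt0_ltr_powR _ r r0).
by rewrite !nnegrE nrm_ge0 ltW // => /(_ isT isT); rewrite ltNge xjM.
Qed.

Lemma lp_closed_ball_closed q M : (0 < q)%E -> 0 < M ->
  forall T (U : set_system T), ProperFilter U -> forall g x,
    U [set t | lp_closed_ball q M (g t)] ->
    (forall j, ncvg U (fun t => g t j) (x j)) -> lp_closed_ball q M x.
Proof.
case: q => [r||] // r0 M0 T U PU g x Ug gx.
  rewrite lte_fin in r0; apply/(lp_closed_ball_finE _ r0 M0) => N.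
  have partial_cvg : \sum_(0 <= j < N) nrm (g t j) `^ r @[t --> U] -->
      \sum_(0 <= j < N) nrm (x j) `^ r.
    apply: cvg_big => [|j _]; first exact: add_continuous.
    exact: cvg_powR r0 (fun t => nrm_ge0 _) (ncvg_nrm (gx j)).
  have partial_le : U [set t | \sum_(0 <= j < N) nrm (g t j) `^ r <= M `^ r].
    by apply: filterS Ug => t /= /(lp_closed_ball_finE _ r0 M0).
  exact: (closed_cvg _ (@closed_le R (M `^ r)) partial_le _ partial_cvg).
apply/lp_closed_ball_infE => j; apply/ler_addgt0Pr => e e0.
have [t [/lp_closed_ball_infE gM /= gx_near]] := filter_ex (filterI Ug (gx j _ e0)).
have := nrm_distD (x j) (g t j) 0; rewrite !subr0 nrm_distC.
have := gM j; lra.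
Qed.

Lemma lp_closed_ball_small_tails_fin (r M : R) (a : nat -> K) d :
  0 < M -> (0 < d)%N -> d%:R < r -> lp_mem nrm (r / (r - d%:R))%:E a ->
  unif_small_tails (lp_closed_ball r%:E M) a d.
Proof.
move=> M0 d_gt0 dr a_mem e e0.
have r0 : 0 < r by apply: lt_trans dr; rewrite ltr0n.
set p := r / (r - d%:R).
have Mr0 : 0 < M `^ r by rewrite powR_gt0.
set mu := e / (2 * M `^ r).
have mu0 : 0 < mu by rewrite divr_gt0 // mulr_gt0.
set C := mu `^ (- (d%:R / (r - d%:R))).
have C0 : 0 < C by rewrite powR_gt0.
have [N tailN] := nneseries_tails_small (fun j => powR_ge0 (nrm (a j)) p) a_mem
  (divr_gt0 e0 (mulr_gt0 (ltr0n _ 2) C0)).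
exists N => x /(lp_closed_ball_finE _ r0 M0) xM m.
apply: (@le_trans _ _ (\sum_(N <= j < m) (mu * nrm (x j) `^ r + C * nrm (a j) `^ p))).
  by apply: ler_sum => j _; apply: young_weighted.
rewrite big_split /= -!mulr_sumr.
have : mu * \sum_(N <= j < m) nrm (x j) `^ r <= e / 2.
  have -> : e / 2 = mu * M `^ r by rewrite /mu; field; rewrite gt_eqF.
  rewrite ler_pM2l //; apply: le_trans (xM m).
  by apply: sum_tail_le => j; exact: powR_ge0.
have : C * \sum_(N <= j < m) nrm (a j) `^ p <= e / 2.
  by rewrite mulrC -ler_pdivlMr // -mulrA -invfM tailN.
lra.
Qed.

Lemma lp_closed_ball_small_tails_inf M (a : nat -> K) d : 0 < M ->
  lp_mem nrm 1%:E a -> unif_small_tails (lp_closed_ball +oo%E M) a d.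
Proof.
move=> M0 a_mem e e0; have Md0 : 0 < M ^+ d by rewrite exprn_gt0.
have [N tailN] := nneseries_tails_small (fun j => powR_ge0 (nrm (a j)) 1) a_mem
  (divr_gt0 e0 Md0).
exists N => x /lp_closed_ball_infE xM m.
apply: (@le_trans _ _ (\sum_(N <= j < m) nrm (a j) `^ 1 * M ^+ d)).
  apply: ler_sum => j _; rewrite powRr1 // ler_wpM2l // lerXn2r ?nnegrE //.
  exact: le_trans (xM j).
by rewrite -mulr_suml -ler_pdivlMr.
Qed.

Lemma lp_closed_ball_small_tails q M (a : nat -> K) d :
  0 < M -> (0 < d)%N -> (d%:R%:E < q)%E -> lp_mem nrm (dual_exp q d) a ->
  unif_small_tails (lp_closed_ball q M) a d.
Proof.
case: q => [r||] // M0 d_gt0 => [|_]; last exact: lp_closed_ball_small_tails_inf.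
by rewrite lte_fin; exact: lp_closed_ball_small_tails_fin.
Qed.

Lemma compactness_statement_holds : compactness_statement nrm.
Proof.
move=> D q I a b M D_gt0 Dq _ a_dual M0 solvable.
have q0 : (0 < q)%E by apply: lt_trans Dq; rewrite lte_fin ltr0n.
have tails i d : (0 < d <= D)%N -> unif_small_tails (lp_closed_ball q M) (a i d) d.
  move=> /[dup] dD /andP[d_gt0 d_le]; apply: lp_closed_ball_small_tails (a_dual i d dD) => //.
  by apply: le_lt_trans Dq; rewrite lee_fin ler_nat.
have solvable_ball S : finite_set S ->
    exists2 x, lp_closed_ball q M x & forall i, S i -> Ppoly D (a i) x = b i.
  by move=> /solvable[x [x_mem xM Sx]]; exists x.
have [x [x_mem xM] Px] := ball_compactness (lp_closed_ball_coord_le q0 M0)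
  (lp_closed_ball_closed q0 M0) tails solvable_ball.
by exists x.
Qed.

End absolute_value.

Section real_scalars.
Variable R : realType.
Local Notation absr := (fun x : R => `|x|).

Lemma real_nrm_complete (u : nat -> R) :
  (forall e, 0 < e -> exists N, forall n m, (N <= n)%N -> (N <= m)%N ->
     `|u n - u m| <= e) ->
  ncvg absr \oo u (limn u).
Proof.
move=> u_cauchy; have : cvgn u.
  apply: cauchy_cvg; apply: cauchy_exP => e e0.
  have [N uN] := u_cauchy _ (divr_gt0 e0 (ltr0n _ 2)).
  exists (u N), N => // n /= Nn; rewrite /ball /= (le_lt_trans (uN _ _ (leqnn N) Nn)) //.
  by rewrite ltr_pdivrMr // ltr_pMr // ltr1n.
move/cvgrPdist_lt => u_lim e /u_lim; apply: filterS => n /=; by rewrite distrC.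
Qed.

Lemma real_nrm_ultralim T (U : set_system T) : UltraFilter U ->
  forall (f : T -> R) (M : R), U [set t | `|f t| <= M] -> exists L, ncvg absr U f L.
Proof.
move=> UU f M fM.
have f_seg : (f @ U) `[- M, M]%classic.
  suff : U (f @^-1` `[- M, M]%classic) by [].
  by apply: filterS fM => t /=; rewrite in_itv /= -ler_norml.
have [L [_ L_cl]] := @segment_compact R (- M) M _ (fmap_proper_filter f ultra_proper) f_seg.
exists L => e e0; have [//|U_far] := in_ultra_setVsetC [set t | `|f t - L| < e] UU.
have {}U_far : (f @ U) [set y | ~ `|y - L| < e] by [].
have [y [/= y_far Ly]] := L_cl _ _ U_far (nbhsx_ballx L e e0).
by exfalso; apply: y_far; rewrite distrC.
Qed.

End real_scalars.

Section complex_scalars.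
Variable R : realType.
Import ComplexField.Normc.
Local Notation absr := (fun x : R => `|x|).

Lemma normc_ge0 (z : R[i]) : 0 <= normc z.
Proof. by case: z => a b; exact: sqrtr_ge0. Qed.

Lemma ler_Re_normc (z : R[i]) : `|complex.Re z| <= normc z.
Proof.
case: z => a b /=; rewrite -sqrtr_sqr ler_sqrt ?lerDl ?sqr_ge0 //.
by rewrite addr_ge0 ?sqr_ge0.
Qed.

Lemma ler_Im_normc (z : R[i]) : `|complex.Im z| <= normc z.
Proof.
case: z => a b /=; rewrite -sqrtr_sqr ler_sqrt ?lerDr ?sqr_ge0 //.
by rewrite addr_ge0 ?sqr_ge0.
Qed.

Lemma ler_normc_Re_Im (z : R[i]) : normc z <= `|complex.Re z| + `|complex.Im z|.
Proof.
case: z => a b /=; have ab0 : 0 <= `|a| + `|b| by rewrite addr_ge0.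
rewrite -[X in _ <= X](ger0_norm ab0) -sqrtr_sqr ler_sqrt ?sqr_ge0 //.
rewrite sqrrD !real_normK ?num_real // lerD2r lerDl.
by rewrite mulrn_wge0 // mulr_ge0.
Qed.

Lemma ncvg_Re_Im T (F : set_system T) {FF : Filter F} (f : T -> R[i]) (A B : R) :
  ncvg absr F (fun t => complex.Re (f t)) A ->
  ncvg absr F (fun t => complex.Im (f t)) B ->
  ncvg (@normc R) F f (A +i* B)%C.
Proof.
move=> fA fB e e0; have e2 : 0 < e / 2 by rewrite divr_gt0.
apply: filterS (filterI (fA _ e2) (fB _ e2)) => t [/= fAt fBt].
rewrite (le_lt_trans (ler_normc_Re_Im _)) // (splitr e).
by case: (f t) fAt fBt => a b /= ? ?; rewrite ltrD.
Qed.

(* The type [Num.NumField.sort R[i]] makes [-->] use the normed topology of R[i]. *)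
Lemma ncvg_normc_cvg T (F : set_system T) {FF : Filter F}
    (f : T -> Num.NumField.sort R[i]) L :
  ncvg (@normc R) F f L -> f @ F --> L.
Proof.
move=> fL; apply/cvgrPdist_lt => e; rewrite ltcE => /andP[/eqP Im_e Re_e].
apply: filterS (fL _ Re_e) => t /=; rewrite -normcN opprB => fLt.
have -> : `|L - f t| = ((normc (L - f t))%:C)%C by case: (L - f t).
by rewrite ltcE /= Im_e eqxx.
Qed.

Lemma complex_nrm_complete (u : nat -> Num.NumField.sort R[i]) :
  (forall e, 0 < e -> exists N, forall n m, (N <= n)%N -> (N <= m)%N ->
     normc (u n - u m) <= e) ->
  ncvg (@normc R) \oo u (limn u).
Proof.
move=> u_cauchy.
have part_cauchy (p : R[i] -> R) : (forall z, `|p z| <= normc z) ->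
    {morph p : z w / z - w} ->
    ncvg absr \oo (fun n => p (u n)) (limn (fun n => p (u n))).
  move=> p_le pB; apply: real_nrm_complete => e /u_cauchy[N uN].
  by exists N => n m Nn Nm; rewrite -pB (le_trans (p_le _)) ?uN.
have ReB : {morph @complex.Re R : z w / z - w} by move=> [? ?] [? ?].
have ImB : {morph @complex.Im R : z w / z - w} by move=> [? ?] [? ?].
have u_lim := ncvg_Re_Im (part_cauchy _ ler_Re_normc ReB) (part_cauchy _ ler_Im_normc ImB).
set L := (_ +i* _)%C in u_lim.
have -> : limn u = L.
  by apply: cvg_lim; [exact: norm_hausdorff | exact: ncvg_normc_cvg (u_lim _)].
exact: u_lim.
Qed.

Lemma complex_nrm_ultralim T (U : set_system T) : UltraFilter U ->
  forall (f : T -> R[i]) (M : R), U [set t | normc (f t) <= M] ->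
  exists L, ncvg (@normc R) U f L.
Proof.
move=> UU f M fM; have part_ultralim (p : R[i] -> R) : (forall z, `|p z| <= normc z) ->
    exists L, ncvg absr U (fun t => p (f t)) L.
  move=> p_le; apply: (real_nrm_ultralim UU (M := M)).
  by apply: filterS fM => t /=; apply: le_trans.
have [A fA] := part_ultralim _ ler_Re_normc; have [B fB] := part_ultralim _ ler_Im_normc.
by exists (A +i* B)%C; exact: ncvg_Re_Im.
Qed.

End complex_scalars.

Theorem theorem3 (R : realType) :
  compactness_statement (K := R) (fun x : R => `|x|) /\
  compactness_statement (K := R[i]) (fun z : R[i] => ComplexField.Normc.normc z).
Proof.
split; apply: compactness_statement_holds.
- exact: normr_ge0.
- by move=> x /normr0_eq0.
- exact: ler_normD.
- exact: normrM.
- exact: normrN.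
- exact: normr0.
- exact: normr1.
- exact: real_nrm_complete.
- exact: real_nrm_ultralim.
- exact: normc_ge0.
- exact: ComplexField.Normc.eq0_normc.
- exact: le_normcD.
- exact: ComplexField.Normc.normcM.
- exact: normcN.
- exact: ComplexField.Normc.normc0.
- exact: ComplexField.Normc.normc1.
- exact: complex_nrm_complete.
- exact: complex_nrm_ultralim.
Qed.
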